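(* Let $A$ be a vector space and give $\mathrm{Sub}\,A$ the coarse open support topology. Then $\mathrm{Sub}\,A$ is a sober space, and for every $V\in\mathrm{Sub}\,A$ the complement of the closure of $\{V\}$ is $\{W\in\mathrm{Sub}\,A: V\not\subset W\}$.
   Context: $\mathrm{Sub}\,A$ is the set of linear subspaces of $A$. The coarse open support topology on $\mathrm{Sub}\,A$ is the coarsest topology in which every set $\check a=\{V\in\mathrm{Sub}\,A: a\notin V\}$, $a\in A$, is open. A space is sober if every irreducible closed set is the closure of a unique point. *)

From HB Require Import structures.
From mathcomp Require Import all_boot all_algebra.
From mathcomp Require Import boolp classical_sets.
Set Implicit Arguments. Unset Strict Implicit. Unset Printing Implicit Defensive.
Import GRing.Theory.
Local Open Scope classical_set_scope.
Local Open Scope ring_scope.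

Definition is_subspace (K : fieldType) (A : lmodType K) (S : set A) : Prop :=
  S 0 /\ (forall x y, S x -> S y -> S (x + y)) /\ (forall (c : K) x, S x -> S (c *: x)).

Definition Subspaces (K : fieldType) (A : lmodType K) : Type := {S : set A | is_subspace S}.

Definition is_topology (T : Type) (O : set (set T)) : Prop :=
  O setT /\ (forall U V, O U -> O V -> O (U `&` V)) /\
  (forall F : set (set T), F `<=` O -> O (\bigcup_(U in F) U)).

Definition generated_open (T : Type) (B : set (set T)) : set (set T) :=
  fun X => forall O, is_topology O -> B `<=` O -> O X.

Definition check_set (K : fieldType) (A : lmodType K) (a : A) : set (Subspaces A) :=
  [set V | ~ (proj1_sig V) a].

Definition coarse_open (K : fieldType) (A : lmodType K) : set (set (Subspaces A)) :=
  generated_open [set U | exists a : A, U = check_set a].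

Definition is_closed (T : Type) (O : set (set T)) (C : set T) : Prop := O (~` C).

Definition closure_in (T : Type) (O : set (set T)) (S : set T) : set T :=
  fun x => forall C, is_closed O C -> S `<=` C -> C x.

Definition irreducible_in (T : Type) (O : set (set T)) (C : set T) : Prop :=
  C !=set0 /\
  (forall C1 C2, is_closed O C1 -> is_closed O C2 -> C = C1 `|` C2 ->
     C = C1 \/ C = C2).

Definition sober (T : Type) (O : set (set T)) : Prop :=
  forall C, is_closed O C -> irreducible_in O C ->
    exists! x : T, C = closure_in O [set x].

From mathcomp Require Import all_boot all_algebra.
From mathcomp Require Import boolp classical_sets.
Local Open Scope classical_set_scope.

(* Every open set of the coarse open support topology is a union of basic
   opens ~a1 ∩ ... ∩ ~an, so a closed set C omitting W is covered by
   finitely many closed sets {V | a ∈ V} with a ∉ W.  Hence closed sets are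
   upward closed, the closure of {V} is {W | V ⊆ W}, and the space is T0.
   If C is closed and irreducible, let V be the intersection of its members:
   were V not in C, C would be covered by finitely many {W | a ∈ W} with
   a ∉ V, and by irreducibility by one of them, forcing a ∈ V.  So V ∈ C and
   C is the closure of {V}. *)

Set Implicit Arguments.
Unset Strict Implicit.

Lemma set_cons (T : eqType) (x : T) (s : seq T) :
  [set` x :: s] = x |` [set` s].
Proof.
apply/seteqP; split => y /=; rewrite inE.
  by case/orP=> [/eqP|]; [left|right].
by case=> [->|ys]; rewrite ?eqxx ?ys ?orbT.
Qed.

Lemma set_cat (T : eqType) (s1 s2 : seq T) :
  [set` s1 ++ s2] = [set` s1] `|` [set` s2].
Proof. by apply/seteqP; split => y /=; rewrite mem_cat => /orP. Qed.

Section Topology.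
Variables (T : Type) (O : set (set T)).
Hypothesis Otop : is_topology O.

Lemma is_closedU (C1 C2 : set T) :
  is_closed O C1 -> is_closed O C2 -> is_closed O (C1 `|` C2).
Proof. by rewrite /is_closed setCU; case: Otop => _ [OI _]; apply: OI. Qed.

Lemma is_closedI (C1 C2 : set T) :
  is_closed O C1 -> is_closed O C2 -> is_closed O (C1 `&` C2).
Proof.
rewrite /is_closed setCI => oC1 oC2; case: Otop => _ [_ Obigcup].
have -> : ~` C1 `|` ~` C2 = \bigcup_(U in [set ~` C1] `|` [set ~` C2]) U.
  by rewrite bigcup_setU !bigcup_set1.
by apply: Obigcup => U [->|->].
Qed.

Lemma is_closed_bigcup_seq (I : eqType) (s : seq I) (F : I -> set T) :
  (forall i, i \in s -> is_closed O (F i)) ->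
  is_closed O (\bigcup_(i in [set` s]) F i).
Proof.
elim: s => [_|i s IHs closedF].
  by rewrite set_nil bigcup_set0 /is_closed setC0; case: Otop.
rewrite set_cons bigcup_setU1; apply: is_closedU.
  by apply: closedF; rewrite mem_head.
by apply: IHs => j js; apply: closedF; rewrite inE js orbT.
Qed.

Lemma irreducible_sub_bigcup (C : set T) (I : eqType) (s : seq I)
    (F : I -> set T) :
  is_closed O C -> irreducible_in O C ->
  (forall i, i \in s -> is_closed O (F i)) ->
  C `<=` \bigcup_(i in [set` s]) F i -> exists2 i, i \in s & C `<=` F i.
Proof.
move=> closedC [[x Cx] irrC]; elim: s => [_|i s IHs closedF].
  by rewrite set_nil bigcup_set0 => /(_ x Cx).
rewrite set_cons bigcup_setU1 => /setIidPl; rewrite setIUr => splitC.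
have closedFi : is_closed O (F i) by apply: closedF; rewrite mem_head.
have closedFs : forall j, j \in s -> is_closed O (F j).
  by move=> j js; apply: closedF; rewrite inE js orbT.
have [CFi|CFs] := irrC _ _ (is_closedI closedC closedFi)
  (is_closedI closedC (is_closed_bigcup_seq closedFs)) (esym splitC).
  by exists i; [rewrite mem_head | apply/setIidPl; rewrite -CFi].
have [j js CFj] := IHs closedFs ((setIidPl _ _).1 (esym CFs)).
by exists j; rewrite ?inE ?js ?orbT.
Qed.

End Topology.

Section Generated.
Variables (T : Type) (B : set (set T)).

Lemma generated_open_topology : is_topology (generated_open B).
Proof.
split; [|split].
- by move=> O [OT _].
- move=> U V oU oV O Otop BO; case: (Otop) => _ [OI _].
  by apply: OI; [apply: oU | apply: oV].
- move=> F FO O Otop BO; case: (Otop) => _ [_ Obigcup].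
  by apply: Obigcup => U /FO; apply.
Qed.

Lemma generated_open_min (O : set (set T)) :
  is_topology O -> B `<=` O -> generated_open B `<=` O.
Proof. by move=> Otop BO U; apply. Qed.

End Generated.

Section CoarseOpenSupport.
Variables (K : fieldType) (A : lmodType K).
Local Notation Sub := (Subspaces A).
Local Notation O := (@coarse_open K A).

Definition containing (a : A) : set Sub := [set W | proj1_sig W a].

Definition meets (s : seq A) : set Sub := \bigcup_(a in [set` s]) containing a.

Lemma meets_cat (s1 s2 : seq A) : meets (s1 ++ s2) = meets s1 `|` meets s2.
Proof. by rewrite /meets set_cat bigcup_setU. Qed.

Lemma containing_closed (a : A) : is_closed O (containing a).
Proof.
rewrite /is_closed.
have -> : ~` containing a = check_set a by apply/seteqP; split.
by move=> O' _; apply; exists a.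
Qed.

(* [~` meets s] is the basic open ~a1 ∩ ... ∩ ~an of the paper,
   for s = [:: a1; ...; an]. *)
Definition basic_union (U : set Sub) : Prop :=
  forall W, U W -> exists s : seq A, ~ meets s W /\ ~` meets s `<=` U.

Lemma basic_union_topology : is_topology basic_union.
Proof.
split; [|split].
- by move=> W _; exists [::]; split=> [[a]|].
- move=> U V bU bV W [/bU [s1 [Ws1 s1U]] /bV [s2 [Ws2 s2V]]].
  exists (s1 ++ s2); rewrite meets_cat setCU; split; first by case.
  by move=> X [X1 X2]; split; [apply: s1U | apply: s2V].
- move=> F bF W [U FU UW]; have [s [Ws sU]] := bF U FU W UW.
  by exists s; split=> // X /sU UX; exists U.
Qed.

Lemma coarse_open_basic_union (U : set Sub) : O U -> basic_union U.
Proof.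
apply: generated_open_min basic_union_topology _ _ => _ [a ->] W Wa.
exists [:: a]; rewrite /meets set_cons1 bigcup_set1.
by split=> [|X]; [apply: Wa | apply: contrapT].
Qed.

Lemma closed_cover (C : set Sub) (W : Sub) :
  is_closed O C -> ~ C W -> exists s : seq A, ~ meets s W /\ C `<=` meets s.
Proof.
move=> /coarse_open_basic_union bC /bC [s [Ws /subsetC sC]].
by exists s; rewrite !setCK in sC.
Qed.

Lemma closed_upward (C : set Sub) (V W : Sub) :
  is_closed O C -> C V -> proj1_sig V `<=` proj1_sig W -> C W.
Proof.
move=> closedC CV VW; apply: contrapT => /(closed_cover closedC) [s [Ws sC]].
by have [a sa Va] := sC V CV; apply: Ws; exists a => //; apply: VW.
Qed.

Lemma closure_set1 (V : Sub) :
  closure_in O [set V] = [set W | proj1_sig V `<=` proj1_sig W].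
Proof.
apply/seteqP; split=> W.
  by move=> VW a Va; apply: (VW _ (containing_closed a)) => _ ->.
by move=> /= VW C closedC VC; apply: closed_upward closedC (VC V erefl) VW.
Qed.

Lemma Subspaces_ext (V W : Sub) : proj1_sig V = proj1_sig W -> V = W.
Proof. by case: V W => [V sV] [W sW] /= VW; apply: eq_exist. Qed.

Lemma closure_set1_inj (V W : Sub) :
  closure_in O [set V] = closure_in O [set W] -> V = W.
Proof.
rewrite !closure_set1 => VW; apply: Subspaces_ext; rewrite eqEsubset; split.
  by have : [set X | proj1_sig W `<=` proj1_sig X] W by []; rewrite -VW.
by have : [set X | proj1_sig V `<=` proj1_sig X] V by []; rewrite VW.
Qed.

Lemma is_subspace_bigcap (C : set Sub) :
  is_subspace (\bigcap_(W in C) proj1_sig W).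
Proof.
split; [|split].
- by move=> W _; case: (proj2_sig W).
- move=> x y Cx Cy W CW; case: (proj2_sig W) => _ [WD _].
  exact: WD (Cx W CW) (Cy W CW).
- move=> c x Cx W CW; case: (proj2_sig W) => _ [_ WZ].
  exact: WZ (Cx W CW).
Qed.

Definition subspace_meet (C : set Sub) : Sub :=
  exist _ (\bigcap_(W in C) proj1_sig W) (is_subspace_bigcap C).

Lemma irreducible_meet_mem (C : set Sub) :
  is_closed O C -> irreducible_in O C -> C (subspace_meet C).
Proof.
move=> closedC irrC; apply: contrapT => /(closed_cover closedC) [s [sV sC]].
have [a sa Ca] := irreducible_sub_bigcup (generated_open_topology _)
  closedC irrC (fun a _ => containing_closed a) sC.
by apply: sV; exists a => // W CW; apply: Ca.
Qed.

Lemma irreducible_closure_meet (C : set Sub) :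
  is_closed O C -> irreducible_in O C -> C = closure_in O [set subspace_meet C].
Proof.
move=> closedC irrC; rewrite closure_set1; apply/seteqP; split=> W.
  by move=> CW a; apply.
exact: closed_upward closedC (irreducible_meet_mem closedC irrC).
Qed.

End CoarseOpenSupport.

Theorem lemma3p5 (K : fieldType) (A : lmodType K) :
  sober (@coarse_open K A) /\
  (forall V : Subspaces A,
     ~` closure_in (@coarse_open K A) [set V] =
     [set W : Subspaces A | ~ (proj1_sig V `<=` proj1_sig W)]).
Proof.
split; last by move=> V; rewrite closure_set1.
move=> C closedC irrC; exists (subspace_meet C).
split; first exact: irreducible_closure_meet.
move=> V CV; apply: closure_set1_inj.
by rewrite -CV -irreducible_closure_meet.
Qed.
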